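(* Let $d\ge 3$ be odd. Then $G_d$ is spherically transitive and fractal.
   Context: Let $d\ge 3$, $X=\{1,\dots,d\}$, $T$ the $d$-regular rooted tree with vertex set $X^*$. $\mathrm{Aut}(T)$ is the group of root-preserving automorphisms with product left-to-right: $(gh)(u)=h(g(u))$. Sections $g|_u$ are defined by $g(uv)=g(u)\,g|_u(v)$; we write $g=(g|_1,\dots,g|_d)\lambda_g$ with $\lambda_g\in S_d$ the action on the first level; $e$ is the identity; $\overline{j}\in\{1,\dots,d\}$ denotes $j$ mod $d$. $G_d=\langle a_1,\dots,a_d\rangle\le\mathrm{Aut}(T)$ where $a_i$ acts on the first level as $(i\ \overline{i+1})$, with $a_i|_i=a_i$, $a_i|_{\overline{i+1}}=a_{\overline{i+1}}$, and $a_i|_x=e$ otherwise. $G_d$ is self-similar (closed under sections). A subgroup $G\le\mathrm{Aut}(T)$ is spherically transitive if it acts transitively on $X^k$ for every $k$. For $u\in X^*$, $\mathrm{St}_G(u)$ is the stabilizer of $u$ and $\pi_u:\mathrm{St}_G(u)\to G$, $\pi_u(g)=g|_u$. A self-similar $G$ is fractal if $\pi_u(\mathrm{St}_G(u))=G$ for every vertex $u$. *)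

From mathcomp Require Import all_boot.
Set Implicit Arguments. Unset Strict Implicit. Unset Printing Implicit Defensive.

(* Alphabet X = {1,...,d} is modelled by 'I_d = {0,...,d-1}; letter k+1 of the
   paper is the ordinal k, and  \overline{j+1}  is  ordS j  (successor mod d).
   Vertices of the d-regular rooted tree T are words  seq 'I_d ;
   tree automorphisms are modelled as functions  seq 'I_d -> seq 'I_d
   (compared extensionally). *)

Definition vertex (d : nat) := seq 'I_d.
Definition treefun (d : nat) := vertex d -> vertex d.

(* Action of the generator a_i:  a_i = (a_i|_1,...,a_i|_d) (i i+1)  with
   a_i|_i = a_i, a_i|_{i+1} = a_{i+1}, other sections trivial. *)
Fixpoint act_a (d : nat) (i : 'I_d) (w : vertex d) {struct w} : vertex d :=
  match w with
  | [::] => [::]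
  | x :: v =>
      if x == i then ordS i :: act_a i v
      else if x == ordS i then i :: act_a (ordS i) v
      else x :: v
  end.

Fixpoint act_ainv (d : nat) (i : 'I_d) (w : vertex d) {struct w} : vertex d :=
  match w with
  | [::] => [::]
  | y :: v =>
      if y == ordS i then i :: act_ainv i v
      else if y == i then ordS i :: act_ainv (ordS i) v
      else y :: v
  end.

Definition gen (d : nat) (s : 'I_d * bool) : treefun d :=
  if s.2 then act_ainv s.1 else act_a s.1.

(* Evaluation of a word s_1 s_2 ... s_n with the left-to-right convention
   (gh)(u) = h(g(u)): s_1 acts first. *)
Definition eval_word (d : nat) (w : seq ('I_d * bool)) : treefun d :=
  foldl (fun f s => gen s \o f) id w.

Definition in_Gd (d : nat) (g : treefun d) : Prop :=
  exists w : seq ('I_d * bool), g =1 eval_word w.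

(* Section g|_u defined by g(uv) = g(u) g|_u(v). *)
Definition section (d : nat) (g : treefun d) (u : vertex d) : treefun d :=
  fun v => drop (size u) (g (u ++ v)).

Definition spherically_transitive (d : nat) (G : treefun d -> Prop) : Prop :=
  forall u v : vertex d, size u = size v -> exists g, G g /\ g u = v.

(* Fractal: pi_u(St_G(u)) = G for every vertex u. *)
Definition fractal (d : nat) (G : treefun d -> Prop) : Prop :=
  forall u : vertex d,
    (forall g, G g -> g u = u -> G (section g u)) /\
    (forall h, G h -> exists g, G g /\ g u = u /\ section g u =1 h).

From mathcomp Require Import all_boot.
From mathcomp Require Import zify.
Set Implicit Arguments. Unset Strict Implicit. Unset Printing Implicit Defensive.

(* For a letter x, the sections at x of the elements of G_d fixing x form a
   group H_x. The element c_k = a_x a_(x+1) ... a_(x+k-1) sends x to x+k with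
   section c_k, and a_(x+k)^2 fixes x+k with section a_(x+k) a_(x+k+1);
   conjugating by c_k shows that c_k in H_x implies c_(k+2) in H_x. As d is
   odd, c_(d-1) is in H_x, and so is c_d, which fixes x; hence a_(x-1) is in
   H_x, then a_x (since a_(x-1)^2 fixes x with section a_x a_(x-1)), then
   every c_k and every generator. So H_x = G_d, and fractality follows by
   induction on the vertex. The c_k act transitively on the first level, and
   fractality lifts this to every level. *)

Section TreeGroup.
Variable d : nat.
Implicit Types (g h f : treefun d) (x y i : 'I_d) (s : 'I_d * bool)
  (w : seq ('I_d * bool)) (u v : vertex d).
Local Notation G := (@in_Gd d).

Lemma eval_word_cons s w v : eval_word (s :: w) v = eval_word w (gen s v).
Proof.
rewrite /eval_word /=; have foldl_compE f v' :
    foldl (fun f t => gen t \o f) f w v' = foldl (fun f t => gen t \o f) id w (f v').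
  by elim: w f v' => [|t w IHw] f v' //=; rewrite IHw [RHS]IHw.
by rewrite foldl_compE.
Qed.

Lemma eval_word_cat w1 w2 v :
  eval_word (w1 ++ w2) v = eval_word w2 (eval_word w1 v).
Proof. by elim: w1 v => [|s w1 IHw] v //=; rewrite !eval_word_cons IHw. Qed.

Lemma Gd_eq g h : G g -> h =1 g -> G h.
Proof. by move=> [w Hw] hg; exists w => v; rewrite hg Hw. Qed.

Lemma Gd_id : G id.
Proof. by exists [::]. Qed.

Lemma Gd_comp g h : G g -> G h -> G (h \o g).
Proof.
by move=> [w1 H1] [w2 H2]; exists (w1 ++ w2) => v; rewrite eval_word_cat /= H1 H2.
Qed.

Lemma Gd_gen s : G (gen s).
Proof. by exists [:: s] => v; rewrite eval_word_cons. Qed.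

Lemma Gd_a i : G (act_a i).
Proof. exact: (Gd_gen (i, false)). Qed.

Lemma Gd_nil g : G g -> g [::] = [::].
Proof. by move=> [w ->]; elim: w => [|[i []] w IHw] //; rewrite eval_word_cons. Qed.

Lemma gen_cons s x : exists y k, G k /\ forall v, gen s (x :: v) = y :: k v.
Proof.
have Gainv i : G (act_ainv i) by exact: (Gd_gen (i, true)).
case: s => i [] /=; rewrite /gen /=; case: eqP => _; try case: eqP => _.
all: eexists; eexists; split; last by move=> v; reflexivity.
all: first [exact: Gainv | exact: Gd_a | exact: Gd_id].
Qed.

Lemma Gd_cons g x : G g -> exists y k, G k /\ forall v, g (x :: v) = y :: k v.
Proof.
move=> [w Hw]; suff [y [k [Gk Hk]]] :
    exists y k, G k /\ forall v, eval_word w (x :: v) = y :: k v.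
  by exists y, k; split=> // v; rewrite Hw.
elim: w {g Hw} x => [|s w IHw] x; first by exists x, id; split; [exact: Gd_id|].
have [y [k [Gk Hk]]] := gen_cons s x.
have [z [k' [Gk' Hk']]] := IHw y.
by exists z, (k' \o k); split=> [|v]; [exact: Gd_comp | rewrite eval_word_cons Hk Hk'].
Qed.

Lemma size_Gd g u : G g -> size (g u) = size u.
Proof.
elim: u g => [|x u IHu] g Gg; first by rewrite Gd_nil.
by have [y [k [Gk ->]]] := Gd_cons x Gg; rewrite /= IHu.
Qed.

Lemma Gd_section g u : G g -> exists h, G h /\ forall v, g (u ++ v) = g u ++ h v.
Proof.
elim: u g => [|x u IHu] g Gg; first by exists g; rewrite Gd_nil.
have [y [k [Gk Hk]]] := Gd_cons x Gg.
have [h [Gh Hh]] := IHu k Gk.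
by exists h; split=> // v; rewrite cat_cons !Hk Hh.
Qed.

Hypothesis d_gt1 : 1 < d.

Lemma ordS_neq i : ordS i != i.
Proof.
apply/eqP => /(congr1 val) /=; have lt_id := ltn_ord i.
have [lt_Sd|le_dS] := ltnP i.+1 d; first by rewrite modn_small //; lia.
by rewrite (_ : i.+1 = d) ?modnn; lia.
Qed.

Lemma act_aK i : cancel (act_a i) (act_ainv i).
Proof.
move=> u; elim: u i => [|y u IHu] i //=.
case: (eqVneq y i) => [->|ne_yi]; first by rewrite /= eqxx IHu.
case: (eqVneq y (ordS i)) => [->|ne_yS] /=; last by rewrite (negbTE ne_yi) (negbTE ne_yS).
by rewrite eq_sym (negbTE (ordS_neq i)) eqxx IHu.
Qed.

Lemma act_ainvK i : cancel (act_ainv i) (act_a i).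
Proof.
move=> u; elim: u i => [|y u IHu] i //=.
case: (eqVneq y (ordS i)) => [->|ne_yS]; first by rewrite /= eqxx IHu.
case: (eqVneq y i) => [->|ne_yi] /=; last by rewrite (negbTE ne_yi) (negbTE ne_yS).
by rewrite (negbTE (ordS_neq i)) eqxx IHu.
Qed.

Lemma act_a_cons i v : act_a i (i :: v) = ordS i :: act_a i v.
Proof. by rewrite /= eqxx. Qed.

Lemma act_a_consS i v : act_a i (ordS i :: v) = i :: act_a (ordS i) v.
Proof. by rewrite /= (negbTE (ordS_neq i)) eqxx. Qed.

Lemma Gd_inv g : G g -> exists g', G g' /\ cancel g g' /\ cancel g' g.
Proof.
move=> [w Hw]; suff [g' [Gg' [K1 K2]]] :
    exists g', G g' /\ cancel (eval_word w) g' /\ cancel g' (eval_word w).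
  by exists g'; split=> //; split=> v; rewrite Hw.
elim: w {g Hw} => [|[i b] w [g' [Gg' [K1 K2]]]].
  by exists id; split; [exact: Gd_id|].
exists (gen (i, ~~ b) \o g'); split; first by apply: Gd_comp => //; exact: Gd_gen.
by case: b; split=> v; rewrite /= eval_word_cons ?K1 ?K2 /gen /= ?act_aK ?act_ainvK.
Qed.

(* h lies in the group H_x = pi_x(St_G(x)) of the header. *)
Definition stab_section x h := exists g, G g /\ forall v, g (x :: v) = x :: h v.

Lemma stab_section_eq x h h' : stab_section x h -> h' =1 h -> stab_section x h'.
Proof. by move=> [g [Gg Hg]] hh'; exists g; split=> // v; rewrite Hg hh'. Qed.

Lemma stab_section_id x : stab_section x id.
Proof. by exists id; split; [exact: Gd_id|]. Qed.

Lemma stab_section_comp x f h :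
  stab_section x f -> stab_section x h -> stab_section x (f \o h).
Proof.
move=> [gf [Gf Hf]] [gh [Gh Hh]].
by exists (gf \o gh); split=> [|v]; [exact: Gd_comp | rewrite /= Hh Hf].
Qed.

Lemma stab_section_inv x h : stab_section x h ->
  exists h', stab_section x h' /\ cancel h h' /\ cancel h' h.
Proof.
move=> [g [Gg Hg]]; have [g' [Gg' [K1 K2]]] := Gd_inv Gg.
have [y [k [Gk Hk]]] := Gd_cons x Gg'.
have g'_hv v : g' (x :: h v) = x :: v by rewrite -Hg K1.
have yx : y = x by have := g'_hv [::]; rewrite Hk => -[].
subst y; exists k; split; first by exists g'.
split=> v; first by have := g'_hv v; rewrite Hk => -[].
by have := K2 (x :: v); rewrite Hk Hg => -[].
Qed.

Lemma stab_section_compKl x f h :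
  stab_section x f -> stab_section x (f \o h) -> stab_section x h.
Proof.
move=> /stab_section_inv [f' [Sf' [K _]]] Sfh.
by apply: stab_section_eq (stab_section_comp Sf' Sfh) _ => v /=; rewrite K.
Qed.

Lemma stab_section_compKr x f h :
  stab_section x h -> stab_section x (f \o h) -> stab_section x f.
Proof.
move=> /stab_section_inv [h' [Sh' [_ K]]] Sfh.
by apply: stab_section_eq (stab_section_comp Sfh Sh') _ => v /=; rewrite K.
Qed.

(* If t fixes y with section r, then g t g^-1 fixes x with section k r k^-1
   (products read left to right), and k itself lies in H_x. *)
Lemma stab_section_conj x y g k r : G g -> (forall v, g (x :: v) = y :: k v) ->
  stab_section y r -> stab_section x k -> stab_section x (r \o k).
Proof.
move=> Gg Hg [t [Gt Ht]] Sk.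
have [g' [Gg' [K1 K2]]] := Gd_inv Gg.
have [z [k' [Gk' Hk']]] := Gd_cons y Gg'.
have g'_yk v : g' (y :: k v) = x :: v by rewrite -Hg K1.
have zx : z = x by have := g'_yk [::]; rewrite Hk' => -[].
subst z; have kk' v : k (k' v) = v by have := K2 (y :: v); rewrite Hk' Hg => -[].
have Sk'rk : stab_section x (k' \o r \o k).
  exists (g' \o t \o g); split=> [|v]; first exact: Gd_comp Gg (Gd_comp Gt Gg').
  by rewrite /= Hg Ht Hk'.
by apply: stab_section_eq (stab_section_comp Sk Sk'rk) _ => v /=; rewrite kk'.
Qed.

Section Letter.
Variable x : 'I_d.

Definition shift k := iter k (@ordS d) x.

Fixpoint climb k : treefun d :=
  if k is k'.+1 then act_a (shift k') \o climb k' else id.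

Lemma val_shift k : val (shift k) = (x + k) %% d.
Proof.
elim: k => [|k IHk]; first by rewrite addn0 modn_small.
by rewrite /shift iterS /= -/(shift k) IHk -addn1 modnDml addn1 addnS.
Qed.

Lemma shift_d : shift d = x.
Proof. by apply: val_inj; rewrite val_shift modnDr modn_small. Qed.

Lemma shift_surj y : exists k, shift k = y.
Proof.
exists (y + (d - x)); apply: val_inj; rewrite val_shift.
have := ltn_ord x; have := ltn_ord y => lt_yd lt_xd.
by rewrite (_ : x + _ = y + d) ?modnDr ?modn_small //; lia.
Qed.

Lemma climb_cons k v : climb k (x :: v) = shift k :: climb k v.
Proof. by elim: k v => [|k IHk] v //=; rewrite IHk act_a_cons. Qed.

Lemma Gd_climb k : G (climb k).
Proof. by elim: k => [|k IHk] /=; [exact: Gd_id | apply: Gd_comp => //; exact: Gd_a]. Qed.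

Lemma stab_section_a_sq i : stab_section i (act_a (ordS i) \o act_a i).
Proof.
exists (act_a i \o act_a i); split; first by apply: Gd_comp; exact: Gd_a.
by move=> v; rewrite /comp act_a_cons act_a_consS.
Qed.

Lemma stab_section_a_sqS i : stab_section (ordS i) (act_a i \o act_a (ordS i)).
Proof.
exists (act_a i \o act_a i); split; first by apply: Gd_comp; exact: Gd_a.
by move=> v; rewrite /comp act_a_consS act_a_cons.
Qed.

Lemma stab_section_climbSS k :
  stab_section x (climb k) -> stab_section x (climb k.+2).
Proof. exact: stab_section_conj (Gd_climb k) (climb_cons k) (stab_section_a_sq _). Qed.

Lemma stab_section_climb_even m : stab_section x (climb m.*2).
Proof.
elim: m => [|m IHm]; first exact: stab_section_id.
by rewrite doubleS; exact: stab_section_climbSS.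
Qed.

Hypothesis d_odd : odd d.

Lemma stab_section_a_x : stab_section x (act_a x).
Proof.
have d_gt0 : 0 < d by lia.
pose z := shift d.-1.
have Sz_x : ordS z = x by rewrite -shift_d -[d in shift d](prednK d_gt0).
have S_even : stab_section x (climb d.-1).
  rewrite -[d.-1]odd_double_half (_ : odd d.-1 = false).
    exact: stab_section_climb_even.
  by move: d_odd; rewrite -(prednK d_gt0) /= => /negbTE.
have S_d : stab_section x (climb d).
  by exists (climb d); split=> [|v]; [exact: Gd_climb | rewrite climb_cons shift_d].
have S_z : stab_section x (act_a z).
  by apply: stab_section_compKr S_even _; rewrite -[d in climb d](prednK d_gt0) in S_d.
by apply: stab_section_compKl S_z _; rewrite -Sz_x; exact: stab_section_a_sqS.
Qed.

Lemma stab_section_climb k : stab_section x (climb k).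
Proof.
suff [] : stab_section x (climb k) /\ stab_section x (climb k.+1) by [].
elim: k => [|k [Sk SkS]]; last by split=> //; exact: stab_section_climbSS.
split; first exact: stab_section_id.
exact: stab_section_comp stab_section_a_x (stab_section_id x).
Qed.

Lemma stab_section_a i : stab_section x (act_a i).
Proof.
have [k <-] := shift_surj i.
exact: stab_section_compKr (stab_section_climb k) (stab_section_climb k.+1).
Qed.

Lemma stab_section_Gd h : G h -> stab_section x h.
Proof.
move=> [w Hw]; apply: stab_section_eq _ Hw.
elim/last_ind: w => [|w [i b] IHw]; first exact: stab_section_id.
have S_gen : stab_section x (gen (i, b)).
  case: b; rewrite /gen /=; last exact: stab_section_a.
  apply: (stab_section_compKl (stab_section_a i)).
  by apply: stab_section_eq (stab_section_id x) _ => v; rewrite /= act_ainvK.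
apply: stab_section_eq (stab_section_comp S_gen IHw) _ => v.
by rewrite -cats1 eval_word_cat eval_word_cons.
Qed.

End Letter.

Lemma Gd_lift u h : odd d -> G h -> exists g, G g /\ forall v, g (u ++ v) = u ++ h v.
Proof.
move=> d_odd Gh; elim: u => [|y u [g [Gg Hg]]]; first by exists h.
have [g' [Gg' Hg']] := stab_section_Gd y d_odd Gg.
by exists g'; split=> // v; rewrite cat_cons Hg' Hg.
Qed.

Lemma Gd_spherically_transitive : odd d -> spherically_transitive G.
Proof.
move=> d_odd u v; elim: v u => [|y v IHv] [|x u] //= size_uv.
  by exists id; split; [exact: Gd_id|].
have [m shift_m] := shift_surj x y.
have [h [Gh Hh]] : exists h, G h /\ h (climb x m u) = v.
  by apply: IHv; rewrite size_Gd; [case: size_uv | exact: Gd_climb].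
have [g [Gg Hg]] := stab_section_Gd y d_odd Gh.
exists (g \o climb x m); split; first by apply: Gd_comp => //; exact: Gd_climb.
by rewrite /= climb_cons shift_m Hg Hh.
Qed.

Lemma Gd_fractal : odd d -> fractal G.
Proof.
move=> d_odd u; split=> [g Gg gu_u | h Gh].
  have [h [Gh Hh]] := Gd_section u Gg.
  by apply: Gd_eq Gh _ => v; rewrite /section Hh gu_u drop_size_cat.
have [g [Gg Hg]] := Gd_lift u d_odd Gh.
exists g; split=> //; split=> [|v]; last by rewrite /section Hg drop_size_cat.
by have := Hg [::]; rewrite cats0 Gd_nil // cats0.
Qed.

End TreeGroup.

Theorem theorem4p6 (d : nat) (hd : 3 <= d) (hodd : odd d) :
  spherically_transitive (@in_Gd d) /\ fractal (@in_Gd d).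
Proof.
have d_gt1 : 1 < d by apply: leq_trans hd.
by split; [exact: Gd_spherically_transitive | exact: Gd_fractal].
Qed.
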